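(* For every integer $n \ge 1$ there exists a word $w_n$ of length $6n$ over an alphabet of $2n$ letters with $\mathrm{E}(w_n) = 1$ such that $$n - \tfrac{1}{6} < \mathrm{E}_{\mathcal{I}}(w_n) < \infty,$$ where $\mathrm{E}_{\mathcal{I}}$ is taken with $\Sigma$ the $2n$-letter alphabet of $w_n$ and $\Gamma$ any finite alphabet with at least two letters.
   Context: For a nonempty word $v$ and integer $p\ge 0$, $v^{p/|v|}$ denotes the prefix of length $p$ of $vvv\cdots$. For a nonempty finite word $u$, $\mathrm{E}(u) = \sup\{ r \in \mathbb{Q} : u = v^r \text{ for some nonempty word } v\}$. $\mathcal{I}$ is the set of injective morphisms $\Sigma^* \to \Gamma^*$, and for $w\in\Sigma^+$, $\mathrm{E}_{\mathcal{I}}(w) = \sup\{\mathrm{E}(h(w)) : h \in \mathcal{I}\}$. *)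

From mathcomp Require Import all_boot all_order all_algebra.
From mathcomp Require Import boolp classical_sets reals ereal Rstruct.
Set Implicit Arguments. Unset Strict Implicit. Unset Printing Implicit Defensive.
Import Order.TTheory GRing.Theory Num.Theory.

Local Open Scope ring_scope.
Local Open Scope classical_set_scope.

(* v^{p/|v|} : the prefix of length p of v v v ... (v nonempty) *)
Definition wpow {T : Type} (v : seq T) (p : nat) : seq T :=
  take p (flatten (nseq p v)).

Definition is_power {T : Type} (u v : seq T) (r : rat) : Prop :=
  v <> [::] /\ exists p : nat, r = p%:R / (size v)%:R /\ u = wpow v p.

Definition Eexp {T : Type} (u : seq T) : \bar Rdefinitions.R :=
  ereal_sup [set x | exists (r : rat) (v : seq T), is_power u v r /\ x = (ratr r)%:E].

Definition word_morphism {S G : Type} (h : seq S -> seq G) : Prop :=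
  forall u v, h (u ++ v) = h u ++ h v.

Definition EI {S : Type} (G : Type) (w : seq S) : \bar Rdefinitions.R :=
  ereal_sup [set x | exists h : seq S -> seq G,
                 word_morphism h /\ injective h /\ x = Eexp (h w)].

From mathcomp Require Import all_boot all_order all_algebra.
From mathcomp Require Import boolp classical_sets reals ereal Rstruct.
From mathcomp Require Import zify lra.
Import Order.TTheory GRing.Theory Num.Theory.

(* Take w_n = B_0 ... B_(n-1) with B_k = a_k a_k b_k a_k b_k b_k, where a_k, b_k are
   the letters 2k, 2k+1.  The letter 0 occurs only at positions 0, 1, 3, so w_n has no
   proper period and E(w_n) = 1.

   Lower bound: the prefix code a_k |-> 0^(n-k) 1 0^(k+1), b_k |-> 0^(n-k-1) 1 1 0^(k+1)
   satisfies 0^k h(B_k) = V 0^(k+1) for one word V independent of k, so the images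
   telescope to h(w_n) = V^n 0^n, of exponent n + n/|V|.

   Upper bound: let h be an injective morphism and q the least period of h(w_n).  Two
   occurrences of a factor of length >= q in a word of least period q lie at positions
   congruent mod q.  If some letter in B_k = xxyxyy (x = h(a_k), y = h(b_k)) had an
   image of length >= q, the square xx (or yy) would give |x| = 0 (or |y| = 0) mod q;
   then xy and yx occur q-aligned inside xyx (or yxy), so xy = yx and h identifies
   a_k b_k with b_k a_k.  Hence every letter image is shorter than q and
   E(h(w_n)) = |h(w_n)|/q <= |w_n| = 6n. *)

Set Implicit Arguments.
Unset Strict Implicit.
Unset Printing Implicit Defensive.

Definition block (T : Type) (a b : T) : seq T := [:: a; a; b; a; b; b].

Lemma flatten_block (T : Type) (x y : seq T) :
  flatten (block x y) = x ++ x ++ y ++ x ++ y ++ y.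
Proof. by rewrite /= cats0. Qed.

Lemma mem_block (T : eqType) (a b c : T) : (c \in block a b) = (c \in [:: a; b]).
Proof. by rewrite !inE; case: (c == a); case: (c == b). Qed.

Section Periodicity.
Variable T : eqType.
Implicit Types (u : seq T) (q : nat).

Definition periodic q u : bool := take (size u - q) u == drop q u.

Lemma periodicP x0 q u :
  reflect (forall i, i + q < size u -> nth x0 u i = nth x0 u (i + q))
          (periodic q u).
Proof.
apply: (iffP eqP) => [E i iq | E].
  by rewrite -[i + q]addnC -nth_drop -E nth_take //; lia.
have su : size (take (size u - q) u) = size u - q by rewrite size_takel ?leq_subr.
apply: (@eq_from_nth _ x0) => [|i]; rewrite su ?size_drop // => iq.
by rewrite nth_take // nth_drop addnC E //; lia.
Qed.

Lemma nth_periodic_mod x0 q u i :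
  periodic q u -> i < size u -> nth x0 u i = nth x0 u (i %% q).
Proof.
move=> /(periodicP x0) Pq; have [-> _|q0] := posnP q; first by rewrite modn0.
elim/ltn_ind: i => i IH iu.
case: (ltnP i q) => [iq | qi]; first by rewrite modn_small.
have -> : i %% q = (i - q) %% q by rewrite -{1}(subnK qi) modnDr.
rewrite -IH; [|lia|lia].
by rewrite -[in LHS](subnK qi) -Pq ?subnK.
Qed.

Lemma nth_periodic_eqmod x0 q u i j : periodic q u ->
  i < size u -> j < size u -> i = j %[mod q] -> nth x0 u i = nth x0 u j.
Proof.
by move=> Pq iu ju eij; rewrite (nth_periodic_mod x0 Pq iu) (nth_periodic_mod x0 Pq ju) eij.
Qed.

Lemma periodic_factor_eq q u s1 x s2 s1' x' s2' : periodic q u ->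
  u = s1 ++ x ++ s2 -> u = s1' ++ x' ++ s2' ->
  size x = size x' -> size s1 = size s1' %[mod q] -> x = x'.
Proof.
move=> Pq E E' sx e1; case: x E sx => [|x0 x] E sx; first by move/esym/size0nil: sx.
apply: (@eq_from_nth _ x0) => // t tx.
have nthE s z s'' : u = s ++ z ++ s'' -> t < size z ->
    nth x0 u (size s + t) = nth x0 z t.
  by move=> -> tz; rewrite nth_cat ltnNge leq_addr addKn /= nth_cat tz.
rewrite -(nthE _ _ _ E) // -(nthE _ _ _ E') -?sx //.
apply: (nth_periodic_eqmod x0 Pq).
- by rewrite E !size_cat; lia.
- by rewrite E' !size_cat -sx; lia.
- by rewrite -modnDml e1 modnDml.
Qed.

Lemma periodic_commute q u s x y s' : periodic q u ->
  u = s ++ x ++ y ++ x ++ s' -> size x = 0 %[mod q] -> x ++ y = y ++ x.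
Proof.
move=> Pq E xq; apply: (periodic_factor_eq Pq (s2 := x ++ s') (s2' := s')).
- by rewrite E !catA.
- by rewrite E !catA.
- by rewrite !size_cat addnC.
- by rewrite size_cat -modnDmr xq mod0n addn0.
Qed.

Lemma periodic_shift x0 q u i j : periodic q u -> 0 < q -> i <= j ->
  j + q <= size u ->
  (forall t, t < q -> nth x0 u (i + t) = nth x0 u (j + t)) ->
  periodic ((j - i) %% q) u.
Proof.
move=> Pq q0 ij jq E; apply/(periodicP x0) => m md.
set d := (j - i) %% q in md *.
pose t := (m + q * i - i) %% q.
have tq : t < q by rewrite ltn_pmod.
have qi : i <= q * i by rewrite leq_pmull.
have it : i + t = m %[mod q].
  by rewrite modnDmr subnKC 1?addnC 1?mulnC ?modnMDl //; lia.
have jt : j + t = m + d %[mod q].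
  have -> : j + t = (j - i) + (i + t) by rewrite addnA subnK.
  by rewrite -modnDm it modnDm addnC modnDmr.
clearbody d t.
have mu : m < size u by lia.
have iu : i + t < size u by lia.
have jtu : j + t < size u by lia.
by rewrite (nth_periodic_eqmod x0 Pq mu iu (esym it)) E // (nth_periodic_eqmod x0 Pq jtu md jt).
Qed.

Section MinimalPeriod.
Variables (q : nat) (u : seq T).
Hypotheses (Pq : periodic q u) (q_gt0 : 0 < q)
           (q_min : forall d, 0 < d < q -> ~~ periodic d u).

Lemma occurrences_eqmod s1 x s2 s1' s2' :
  u = s1 ++ x ++ s2 -> u = s1' ++ x ++ s2' -> q <= size x ->
  size s1 = size s1' %[mod q].
Proof.
wlog le1 : s1 s2 s1' s2' / size s1 <= size s1'.
  move=> W E E' qx; case: (leqP (size s1) (size s1')) => [|/ltnW] le.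
    exact: W E E' qx.
  exact/esym/(W _ _ _ _ le E' E qx).
case: x => [|x0 x] E E' qx; first by move: q_gt0 qx => /=; lia.
have nthE s z s'' t : u = s ++ z ++ s'' -> t < size z ->
    nth x0 u (size s + t) = nth x0 z t.
  by move=> -> tz; rewrite nth_cat ltnNge leq_addr addKn /= nth_cat tz.
have fit : size s1' + q <= size u by rewrite E' !size_cat; lia.
have/(periodic_shift Pq q_gt0 le1 fit) per_d : forall t, t < q ->
    nth x0 u (size s1 + t) = nth x0 u (size s1' + t).
  by move=> t tq; rewrite (nthE _ _ _ _ E) ?(nthE _ _ _ _ E') //; lia.
apply/esym/eqP; rewrite eqn_mod_dvd // /dvdn.
case: posnP => // d_gt0.
have d_lt : (size s1' - size s1) %% q < q by rewrite ltn_pmod.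
by have/negP[] := q_min (introT andP (conj d_gt0 d_lt)).
Qed.

Lemma square_factor_size s x s' :
  u = s ++ x ++ x ++ s' -> q <= size x -> size x = 0 %[mod q].
Proof.
move=> E qx; have E' : u = (s ++ x) ++ x ++ s' by rewrite E catA.
have := occurrences_eqmod E E' qx.
by rewrite size_cat -[in LHS](addn0 (size s)) => /eqP; rewrite eqn_modDl => /eqP.
Qed.

Lemma block_factor_commute pre x y post :
  u = pre ++ flatten (block x y) ++ post -> q <= size x \/ q <= size y ->
  x ++ y = y ++ x.
Proof.
rewrite flatten_block => E [qx | qy].
  apply: (periodic_commute Pq (s := pre ++ x) (s' := y ++ y ++ post)).
    by rewrite E -!catA.
  by apply: (square_factor_size (s := pre) (s' := y ++ x ++ y ++ y ++ post)) qx; rewrite E -!catA.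
apply/esym/(periodic_commute Pq (s := pre ++ x ++ x) (s' := y ++ post)).
  by rewrite E -!catA.
by apply: (square_factor_size (s := pre ++ x ++ x ++ y ++ x) (s' := post)) qy; rewrite E -!catA.
Qed.

End MinimalPeriod.

End Periodicity.

Lemma periodic_map (T T' : eqType) (f : T -> T') q (u : seq T) :
  periodic q u -> periodic q (map f u).
Proof. by move=> /eqP E; rewrite /periodic size_map -map_take -map_drop E. Qed.

Section Powers.
Variable T : Type.
Implicit Types (v : seq T) (m p N : nat).

Lemma size_flatten_nseq v m : size (flatten (nseq m v)) = m * size v.
Proof. by elim: m => //= m IH; rewrite size_cat IH mulSn. Qed.

Lemma take_flatten_nseq v p N :
  p <= N * size v -> take p (flatten (nseq N v)) = wpow v p.
Proof.
case: v => [|a v] pN; first by move: pN; rewrite muln0 leqn0 => /eqP->; rewrite !take0.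
have pp : p <= p * size (a :: v) by rewrite leq_pmulr.
transitivity (take p (flatten (nseq (N + p) (a :: v)))).
  by rewrite nseqD flatten_cat takel_cat ?size_flatten_nseq.
by rewrite addnC nseqD flatten_cat takel_cat ?size_flatten_nseq.
Qed.

Lemma size_wpow v p : v <> [::] -> size (wpow v p) = p.
Proof.
by case: v => // a v _; rewrite size_takel // size_flatten_nseq leq_pmulr.
Qed.

Lemma wpow_prefix v p : p <= size v -> wpow v p = take p v.
Proof. by move=> pv; rewrite -(@take_flatten_nseq _ _ 1) ?mul1n //= cats0. Qed.

Lemma wpow_mul_add v m p : v <> [::] ->
  wpow v (m * size v + p) = flatten (nseq m v) ++ wpow v p.
Proof.
move=> vn; have v_gt0 : 0 < size v by case: v vn.
rewrite -(@take_flatten_nseq _ _ (m + p)); last by rewrite mulnDl leq_add2l leq_pmulr.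
rewrite nseqD flatten_cat takeD take_size_cat ?size_flatten_nseq //.
by rewrite drop_size_cat ?size_flatten_nseq // take_flatten_nseq // leq_pmulr.
Qed.

Lemma flatten_nseqSr v m : flatten (nseq m.+1 v) = flatten (nseq m v) ++ v.
Proof. by rewrite -addn1 nseqD flatten_cat /= cats0. Qed.

End Powers.

Lemma periodic_wpow (T : eqType) (v : seq T) p :
  v <> [::] -> periodic (size v) (wpow v p).
Proof.
move=> vn; rewrite /periodic size_wpow //; case: (leqP (size v) p) => [vp | pv].
  have -> : drop (size v) (wpow v p) = wpow v (p - size v).
    have {1}-> : p = 1 * size v + (p - size v) by rewrite mul1n subnKC.
    by rewrite wpow_mul_add //= cats0 drop_size_cat.
  rewrite /wpow take_takel ?leq_subr // take_flatten_nseq //.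
  by rewrite (leq_trans (leq_subr _ _)) // leq_pmulr //; case: v vn {vp}.
by rewrite (eqP (ltnW pv : p - size v == 0)) take0 drop_oversize // size_wpow // ltnW.
Qed.

Section Exponent.
Local Open Scope ring_scope.
Variable T : eqType.
Implicit Types (u v : seq T) (r : rat).

Lemma is_power_periodic u v r : is_power u v r -> periodic (size v) u.
Proof. by case=> vn [p [_ ->]]; exact: periodic_wpow. Qed.

Lemma is_power_ratio u v r : is_power u v r -> r = (size u)%:R / (size v)%:R.
Proof. by case=> vn [p [-> ->]]; rewrite size_wpow. Qed.

Lemma Eexp_le u c : (forall q, (0 < q)%N -> periodic q u -> (size u <= c * q)%N) ->
  (Eexp u <= c%:R%:E)%E.
Proof.
move=> bound; apply: ge_ereal_sup => _ [r [v [pw ->]]].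
have v_gt0 : (0 < size v)%N by case: pw; case: v.
rewrite lee_fin (is_power_ratio pw) -(ratr_nat _ c) ler_rat.
by rewrite ler_pdivrMr ?ltr0n // -natrM ler_nat bound // (is_power_periodic pw).
Qed.

Lemma Eexp_wpow_ge v p : v <> [::] ->
  ((p%:R / (size v)%:R : Rdefinitions.R)%:E <= Eexp (wpow v p))%E.
Proof.
move=> vn; apply: ereal_sup_ubound; exists (p%:R / (size v)%:R), v.
split; first by split=> //; exists p.
by rewrite fmorph_div !rmorph_nat.
Qed.

Lemma Eexp_unbordered u : u <> [::] ->
  (forall q, (0 < q < size u)%N -> ~~ periodic q u) -> Eexp u = 1%E.
Proof.
move=> un unb; apply/le_anti/andP; split.
  apply: le_trans (Eexp_le (c := 1) _) _ => // q q_gt0 Pq.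
  by rewrite mul1n leqNgt; apply: contraL Pq => uq; apply: unb; rewrite q_gt0.
have u_gt0 : (0 < size u)%N by case: u un {unb}.
have := Eexp_wpow_ge (size u) un.
by rewrite wpow_prefix // take_size divff // pnatr_eq0 -lt0n.
Qed.

End Exponent.

Section Morphisms.
Variables (S G : Type).
Implicit Types (h : seq S -> seq G) (f : S -> seq G).

Lemma morph_nil h : word_morphism h -> h [::] = [::].
Proof.
move=> hm; apply/nilP; rewrite /nilp -(eqn_add2l (size (h [::]))) addn0.
by rewrite -size_cat -hm.
Qed.

Lemma morphismE h s : word_morphism h -> h s = flatten [seq h [:: c] | c <- s].
Proof. by move=> hm; elim: s => [|c s IH] /=; [exact: morph_nil | rewrite -IH -hm]. Qed.

Lemma flatten_map_morphism f : word_morphism (fun s => flatten (map f s)).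
Proof. by move=> s t; rewrite map_cat flatten_cat. Qed.

Lemma flatten_map_inj f :
  (forall c d s t, f c ++ s = f d ++ t -> c = d) -> (forall c, f c <> [::]) ->
  injective (fun s => flatten (map f s)).
Proof.
move=> prefix_code f_nil; elim=> [|c s IH] [|d t] //=.
- by case: (f d) (f_nil d).
- by case: (f c) (f_nil c).
move=> E; have cd := prefix_code _ _ _ _ E; subst d; congr (_ :: _); apply: IH.
by have := congr1 (drop (size (f c))) E; rewrite !drop_size_cat.
Qed.

End Morphisms.

Lemma size_morph_le (S : eqType) (G : Type) (h : seq S -> seq G) s q :
  word_morphism h -> (forall c, c \in s -> size (h [:: c]) <= q) ->
  size (h s) <= size s * q.
Proof.
move=> hm; elim: s => [|c s IH] bnd; first by rewrite morph_nil.
rewrite (hm [:: c] s) size_cat mulSn leq_add ?bnd ?mem_head // IH // => d ds.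
by rewrite bnd // inE ds orbT.
Qed.

Definition covered_by_blocks (S : eqType) (w : seq S) : Prop :=
  forall c, c \in w -> exists a b pre post,
    [/\ a != b, c \in [:: a; b] & w = pre ++ block a b ++ post].

Lemma covered_by_blocks_flatten (I S : eqType) (a b : I -> S) (s : seq I) :
  (forall i, i \in s -> a i != b i) ->
  covered_by_blocks (flatten [seq block (a i) (b i) | i <- s]).
Proof.
move=> ab c /flatten_mapP [i si cb]; case/splitPr: si ab => s1 s2 ab.
exists (a i), (b i), (flatten [seq block (a i) (b i) | i <- s1]),
  (flatten [seq block (a i) (b i) | i <- s2]); split.
- by rewrite ab // mem_cat mem_head orbT.
- by rewrite -mem_block.
- by rewrite map_cat flatten_cat.
Qed.

Section UpperBound.
Variables (S G : eqType) (h : seq S -> seq G).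
Hypotheses (h_morph : word_morphism h) (h_inj : injective h).

Lemma morph_block pre a b post :
  h (pre ++ block a b ++ post) =
  h pre ++ flatten (block (h [:: a]) (h [:: b])) ++ h post.
Proof. by rewrite !h_morph (morphismE (block a b) h_morph). Qed.

Lemma size_morph_periodic_le w q : covered_by_blocks w ->
  0 < q -> periodic q (h w) -> size (h w) <= size w * q.
Proof.
move=> cov q_gt0 Pq.
have ex_period : exists q, (0 < q) && periodic q (h w) by exists q; rewrite q_gt0.
case: (ex_minnP ex_period) => q0 /andP[q0_gt0 Pq0] q0_min.
have q0_min' d : 0 < d < q0 -> ~~ periodic d (h w).
  case/andP=> d_gt0 dq0; apply/negP => Pd.
  by have := q0_min d; rewrite d_gt0 Pd leqNgt dq0 => /(_ isT).
apply: size_morph_le => // c /cov [a [b [pre [post [ab cab E]]]]].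
suff : size (h [:: c]) < q0.
  by move=> cq0; rewrite ltnW // (leq_trans cq0) // q0_min // q_gt0.
rewrite ltnNge; apply/negP => q0c.
have/(block_factor_commute Pq0 q0_gt0 q0_min') : h w = h pre ++
    flatten (block (h [:: a]) (h [:: b])) ++ h post by rewrite E morph_block.
move=> ab_comm; have : h [:: a; b] = h [:: b; a].
  rewrite (h_morph [:: a] [:: b]) (h_morph [:: b] [:: a]) ab_comm //.
  by move: cab q0c; rewrite !inE => /orP[] /eqP ->; [left | right].
by move/h_inj => [ab_eq]; rewrite ab_eq eqxx in ab.
Qed.

End UpperBound.

Lemma EI_le_size (S G : eqType) (w : seq S) :
  covered_by_blocks w -> (EI G w <= (size w)%:R%:E)%E.
Proof.
move=> cov; apply: ge_ereal_sup => _ [h [h_morph [h_inj ->]]].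
by apply: Eexp_le => q q_gt0 Pq; apply: size_morph_periodic_le.
Qed.

Definition wn (n : nat) : seq nat := flatten [seq block k.*2 k.*2.+1 | k <- iota 0 n].

Lemma size_wn n : size (wn n) = 6 * n.
Proof. by rewrite /wn -[n in RHS](size_iota 0); elim: (iota 0 n) => //= k s ->; lia. Qed.

Lemma mem_wn n c : (c \in wn n) = (c < n.*2).
Proof.
apply/flatten_mapP/idP => [[k] | cn].
  by rewrite mem_iota mem_block !inE => /andP[_ kn] /orP[] /eqP->; lia.
exists c./2; first by rewrite mem_iota; lia.
by rewrite mem_block -[X in X \in _](odd_double_half c); case: (odd c); rewrite !inE eqxx ?orbT.
Qed.

Lemma wnSr n : wn n.+1 = wn n ++ block n.*2 n.*2.+1.
Proof. by rewrite /wn -addn1 iotaD map_cat flatten_cat /= ?cats0. Qed.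

Lemma wnS n : wn n.+1 = block 0 1 ++ flatten [seq block k.*2 k.*2.+1 | k <- iota 1 n].
Proof. by []. Qed.

Lemma nth_wn_eq0 n i : i < size (wn n) -> nth 0 (wn n) i = 0 -> i \in [:: 0; 1; 3].
Proof.
case: n => [|n]; first by rewrite size_wn.
rewrite wnS; set tail := flatten _; rewrite size_cat nth_cat /= => iw.
case: ltnP => i6; first by do 6 (case: i iw i6 => [|i] //= iw i6).
have/(mem_nth 0) : i - 6 < size tail by lia.
move=> /flatten_mapP [k]; rewrite mem_iota mem_block !inE => /andP[k1 _].
by case/orP=> /eqP-> k0; exfalso; lia.
Qed.

Lemma wn_unbordered n q : 0 < q < size (wn n) -> ~~ periodic q (wn n).
Proof.
case: n => [|n]; first by rewrite size_wn muln0 ltn0 andbF.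
case/andP=> q_gt0 qw; apply/negP => /(periodicP 0) Pq.
have/(nth_wn_eq0 qw) : nth 0 (wn n.+1) q = 0 := esym (Pq 0 qw).
rewrite !inE => q013.
have q1w : 1 + q < size (wn n.+1) by rewrite size_wn; move: q013; lia.
have/(nth_wn_eq0 q1w) : nth 0 (wn n.+1) (1 + q) = 0 := esym (Pq 1 q1w).
rewrite !inE; lia.
Qed.

Section Code.
Variables (G : eqType) (g0 g1 : G) (n : nat).
Hypothesis g01 : g0 != g1.
Local Notation zeros k := (nseq k g0).

Definition code (c : nat) : seq G :=
  zeros (n - uphalf c) ++ nseq (odd c).+1 g1 ++ zeros (c./2).+1.

Definition period_word : seq G :=
  zeros n ++ [:: g1] ++ zeros n.+1 ++ [:: g1] ++ zeros n ++ [:: g1; g1] ++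
  zeros n.+1 ++ [:: g1] ++ zeros n ++ [:: g1; g1] ++ zeros n ++ [:: g1; g1].

Lemma zeros_cons_inj l l' s s' :
  zeros l ++ g1 :: s = zeros l' ++ g1 :: s' -> l = l' /\ s = s'.
Proof.
have g10 : g1 <> g0 by move/esym/eqP; apply/negP.
elim: l l' => [|l IH] [|l'] //= [].
- by move->.
- by move=> /g10.
- by move=> /esym /g10.
- by case/IH=> -> ->.
Qed.

Lemma code_prefix c d s t : c < n.*2 -> d < n.*2 ->
  code c ++ s = code d ++ t -> c = d.
Proof.
move=> cn dn; rewrite /code -!catA => /zeros_cons_inj [ehalf].
move=> /(congr1 (head g0)) head_eq.
have/eqP odd_cd : odd c == odd d.
  by move: head_eq; case: (odd c); case: (odd d) => //= e; move: g01; rewrite e eqxx.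
move: (odd_double_half c) (odd_double_half d) ehalf cn dn.
by rewrite !uphalf_half odd_cd; case: (odd d) => /=; lia.
Qed.

Lemma code_nil c : code c <> [::].
Proof. by rewrite /code; case: (zeros _). Qed.

Lemma zeros_cat a b s : zeros a ++ zeros b ++ s = zeros (a + b) ++ s.
Proof. by rewrite catA -nseqD. Qed.

Lemma code_double k : code k.*2 = zeros (n - k) ++ [:: g1] ++ zeros k.+1.
Proof. by rewrite /code odd_double uphalf_double doubleK. Qed.

Lemma code_doubleS k : code k.*2.+1 = zeros (n - k.+1) ++ [:: g1; g1] ++ zeros k.+1.
Proof. by rewrite /code uphalfE /= odd_double uphalf_double doubleK. Qed.

Lemma code_block k : k < n ->
  zeros k ++ flatten (map code (block k.*2 k.*2.+1)) = period_word ++ zeros k.+1.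
Proof.
move=> kn; rewrite flatten_block code_double code_doubleS /period_word -!catA.
by rewrite !zeros_cat (subnKC kn) addSn (subnKC (ltnW kn)).
Qed.

Lemma code_wn_prefix m : m <= n ->
  flatten (map code (wn m)) = flatten (nseq m period_word) ++ zeros m.
Proof.
elim: m => [|m IH] mn //.
rewrite wnSr map_cat flatten_cat IH; last exact: ltnW.
by rewrite -catA code_block // (flatten_nseqSr period_word m) catA.
Qed.

Lemma period_word_nil : period_word <> [::].
Proof. by rewrite /period_word; case: (zeros n). Qed.

Lemma code_wn : flatten (map code (wn n)) = wpow period_word (n * size period_word + n).
Proof.
rewrite code_wn_prefix // wpow_mul_add ?wpow_prefix; last exact: period_word_nil.
  by rewrite /period_word take_size_cat ?size_nseq.
by rewrite /period_word size_cat size_nseq leq_addr.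
Qed.

Lemma Eexp_code_wn :
  ((n%:R : Rdefinitions.R)%:E <= Eexp (flatten (map code (wn n))))%E.
Proof.
have V_gt0 : (0 < size period_word)%N by case: period_word period_word_nil.
rewrite code_wn; apply: le_trans (Eexp_wpow_ge _ period_word_nil).
by rewrite lee_fin ler_pdivlMr ?ltr0n // -natrM ler_nat leq_addr.
Qed.

End Code.

Section OrdinalWord.
(* [x0] is only the default value of [insubd]: every letter of [wn n] is below [2 * n]. *)
Variables (n : nat) (x0 : 'I_(2 * n)).
Local Notation w := (map (insubd x0) (wn n)).

Lemma val_insubd_wn : map val w = wn n.
Proof.
rewrite -map_comp; apply: map_id_in => c; rewrite mem_wn -mul2n => cn /=.
by rewrite val_insubd cn.
Qed.

Lemma mem_insubd_wn a : a \in w.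
Proof. by rewrite -[a](valKd x0) map_f // mem_wn -mul2n ltn_ord. Qed.

Lemma insubd_wn_unbordered q : 0 < q < size w -> ~~ periodic q w.
Proof.
rewrite size_map => qw; apply: contraNN (wn_unbordered qw) => /(periodic_map val).
by rewrite val_insubd_wn.
Qed.

Lemma insubd_wn_covered : covered_by_blocks w.
Proof.
rewrite /wn map_flatten -map_comp.
apply: covered_by_blocks_flatten => k; rewrite mem_iota => kn.
by rewrite -(inj_eq val_inj) !val_insubd !ifT //; lia.
Qed.

Lemma EI_insubd_wn_ge (G : eqType) (g0 g1 : G) : g0 != g1 ->
  ((n%:R : Rdefinitions.R)%:E <= EI G w)%E.
Proof.
move=> g01; apply: le_trans (Eexp_code_wn g0 g1 n) _.
apply: ereal_sup_ubound; exists (fun s => flatten (map (code g0 g1 n \o val) s)).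
split; first exact: flatten_map_morphism.
split; last by rewrite map_comp val_insubd_wn.
apply: flatten_map_inj => [c d s t /(code_prefix g01) | c]; last exact: code_nil.
by rewrite -!mul2n => /(_ (ltn_ord c) (ltn_ord d)) /val_inj.
Qed.

End OrdinalWord.

Local Open Scope ring_scope.

Theorem theorem11 (n : nat) (hn : (1 <= n)%N) :
  exists w : seq 'I_(2 * n),
    size w = (6 * n)%N /\
    (forall a : 'I_(2 * n), a \in w) /\
    Eexp w = 1%E /\
    forall G : finType, (2 <= #|G|)%N ->
      ((n%:R - 1 / 6 : Rdefinitions.R)%:E < EI G w)%E /\ (EI G w < +oo)%E.
Proof.
have x0 : 'I_(2 * n) by apply: (@Ordinal _ 0); rewrite muln_gt0.
have size_w : size (map (insubd x0) (wn n)) = (6 * n)%N by rewrite size_map size_wn.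
exists (map (insubd x0) (wn n)); split=> //; split; first exact: mem_insubd_wn.
split.
  apply: Eexp_unbordered; last exact: insubd_wn_unbordered.
  by move/(congr1 size); rewrite size_w /=; lia.
move=> G /card_gt1P [g0 [g1 [_ _ g01]]]; split.
  by apply: lt_le_trans (EI_insubd_wn_ge x0 g01); rewrite lte_fin; lra.
exact: le_lt_trans (EI_le_size G (@insubd_wn_covered n x0)) (ltry _).
Qed.
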